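(* Let $G=(V,E)$ be a social network with seller $s$ and buyers $N$, and let the fair diffusion mechanism (FDM) be as defined in the context. For every feasible action profile $a$, the seller's revenue under FDM, $\sum_{i\in N}p_i(a)$, is at least the seller's revenue under IDM, namely $v^{1^{st}}_{N_{-c_1}}$ (where $c_1$ is the first element of the strong critical ancestor sequence of the highest bidder $h$), and this in turn is at least the seller's revenue $v^{2^{nd}}_{r_s}$ of the Vickrey (second-price) auction held only among the seller's neighbours $r_s$, where $v^{2^{nd}}_{r_s}$ denotes the second-highest reported valuation among $r_s$.
   Context: Model. A seller $s$ sells one item on an undirected graph $G=(V,E)$ with $V=N\cup\{s\}$, $N=\{1,\dots,n\}$ the buyers. Each buyer $i$ has neighbour set $r_i\subseteq V$ and private valuation $v_i\ge 0$; her type is $\theta_i=(v_i,r_i)$; the seller's valuation is $0$ and $r_s$ denotes the seller's neighbours. Each buyer reports an action $a_i=(v_i',r_i')$ with $v_i'\ge0$ the reported valuation and $r_i'\subseteq r_i$ the neighbours she invites, or $a_i=nil$ if she does not participate. A profile $a$ is feasible if every $i$ with $a_i\neq nil$ is reachable by a path $s,k_1,\dots,k_m,i$ with $k_1\in r_s$, $k_{t+1}\in r'_{k_t}$ and $i\in r'_{k_m}$. All graph notions below refer to this reported network (participating buyers, with $j$ reachable from $i$ when $j\in r_i'$, and from $s$ when $j\in r_s$); $d_i$ is the length of the shortest such path from $s$ to $i$. A mechanism gives an allocation $\pi_i(a)\in\{0,1\}$ (at most one winner) and payments $p_i(a)\in\mathbb{R}$ (negative means $i$ receives money); the seller's revenue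 is $\sum_{i\in N}p_i(a)$. Definitions. A set $D\subseteq N$ is a cut set of buyer $i$ if no path from $s$ to $i$ exists without $D$; it is a minimal cut set if no proper subset is a cut set. $j$ is a critical ancestor of $i$ if $j$ belongs to a minimal cut set of $i$; a strong critical ancestor if $\{j\}$ is a minimal cut set of $i$; a weak critical ancestor if critical but not strong. $V_i=\{j\in N: i$ is a strong critical ancestor of $j\}$ (so $i\in V_i$); for $K\subseteq N$, $N_{-K}=N\setminus\bigcup_{i\in K}V_i$, and $N_{-i}=N_{-\{i\}}$. For $D\subseteq N$, $v_D^{1^{st}}=\max_{i\in D}v_i'$, and $g_D^{1^{st}}\in\arg\max_{i\in D}v^{1^{st}}_{V_i}$ (random tie-breaking). The strong critical ancestor sequence of $i$ is $C_i=(c_1^i,\dots,c_k^i)$, the strong critical ancestors of $i$ ordered by strictly increasing depth, with $c_k^i=i$. FDM. Let $h\in\arg\max_{i\in N}v_i'$ (random tie-breaking) and $C=(c_1,\dots,c_h)$ its strong critical ancestor sequence. For consecutive $c_j,c_{j+1}$, let $M_{c_jc_{j+1}}$ be the set of weak critical ancestors of $h$ lying on some simple path from $c_j$ to $c_{j+1}$ (for the last element the corresponding set $\{c_{j+1}\}\cup M_{c_jc_{j+1}}$ is empty). Allocation: the item goes to the first $c_j\in C$ (smallest $j$) with $v'_{c_j}=v^{1^{st}}_{N_{-(\{c_{j+1}\}\cup M_{c_jc_{j+1}})}}$; call it $c_w$, and let $\hat C=(c_1,\dots,c_w)$. Rewards: for $c_j\in\hat C$ (with $j\ge 2$), $R_{c_j}=\big(v^{1^{st}}_{N_{-(\{c_j\}\cup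 \{g^{1^{st}}_{M_{c_{j-1}c_j}}\})}}-v^{1^{st}}_{N_{-(\{c_j\}\cup M_{c_{j-1}c_j})}}\big)/(|M_{c_{j-1}c_j}|+1)$; for $i\in M_{c_{j-1}c_j}$, $R_i=\big(v^{1^{st}}_{N_{-(\{i\}\cup\{c_j\})}}-v^{1^{st}}_{N_{-(\{c_j\}\cup M_{c_{j-1}c_j})}}\big)/(|M_{c_{j-1}c_j}|+1)$; otherwise $R_i=0$. Payments: $p_{c_j}=v^{1^{st}}_{N_{-c_j}}-v^{1^{st}}_{N_{-(\{c_{j+1}\}\cup M_{c_jc_{j+1}})}}-R_{c_j}$ for $c_j\in\hat C$, $j<w$; $p_{c_w}=v^{1^{st}}_{N_{-c_w}}-R_{c_w}$; $p_i=-R_i$ for $i\in M_{c_{j-1}c_j}$, $2\le j\le w$; $p_i=0$ otherwise. IDM (the information diffusion mechanism of Li et al.) yields seller revenue $v^{1^{st}}_{N_{-c_1}}$ on the same profile. *)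

From HB Require Import structures.
From mathcomp Require Import all_boot all_order all_algebra.
Set Implicit Arguments. Unset Strict Implicit. Unset Printing Implicit Defensive.
Import Order.TTheory GRing.Theory Num.Theory.
Local Open Scope ring_scope.

Section FDM.
Variables (R : realFieldType) (T : finType).
(* rs : the seller's neighbours r_s (buyers are the elements of T) *)
Variable rs : {set T}.
(* action profile: a i = None means nil, a i = Some (v'_i, r'_i) *)
Variable a : T -> option (R * {set T}).

Definition part (i : T) : bool := a i != None.
Definition rval (i : T) : R := if a i is Some (x, _) then x else 0.
Definition rinv (i : T) : {set T} := if a i is Some (_, Sr) then Sr else set0.
(* N : participating buyers (all graph notions refer to the reported network) *)
Definition Npart : {set T} := [set i | part i].

(* edges of the reported network (None = seller s), with vertices of D removed *)
Definition sedge (D : {set T}) (x y : option T) : bool :=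
  match x, y with
  | None, Some j => [&& j \in rs, part j & j \notin D]
  | Some i, Some j => [&& part i, i \notin D, j \in rinv i, part j & j \notin D]
  | _, _ => false
  end.

Definition reach_avoid (D : {set T}) (i : T) : bool :=
  connect (sedge D) None (Some i).

Definition feasible : Prop := forall i, part i -> reach_avoid set0 i.

Definition cutset (D : {set T}) (i : T) : bool := ~~ reach_avoid D i.
Definition mincut (D : {set T}) (i : T) : bool :=
  cutset D i && [forall D' : {set T}, (D' \proper D) ==> ~~ cutset D' i].
Definition critical (j i : T) : bool := [exists D : {set T}, mincut D i && (j \in D)].
Definition strong (j i : T) : bool := mincut [set j] i.
Definition weak (j i : T) : bool := critical j i && ~~ strong j i.

(* V_i = { j | i is a strong critical ancestor of j } *)
Definition Vset (i : T) : {set T} := [set j | strong i j].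
Definition Nminus (K : {set T}) : {set T} := Npart :\: \bigcup_(i in K) Vset i.
Definition vmax (D : {set T}) : R := \big[Num.max/0]_(i in D) rval i.
(* v^{2nd}_D : second highest reported valuation in D (0 if |D| < 2) *)
Definition v2nd (D : {set T}) : R :=
  nth 0 (sort (fun x y : R => y <= x) [seq rval i | i <- enum D]) 1.

Definition reachk (k : nat) (i : T) : bool :=
  [exists p : k.-tuple (option T), path (sedge set0) None p && (last None p == Some i)].
(* d_i : length of a shortest path from s to i (shortest paths have <= #|T| edges) *)
Definition depth (i : T) : nat := find (fun k => reachk k i) (iota 0 #|T|.+1).

Definition Cseq (i : T) : seq T :=
  sort (fun x y => (depth x <= depth y)%N) (enum [set j | strong j i]).

Definition bedge (x y : T) : bool := [&& part x, y \in rinv x & part y].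
Definition onsp (x y z : T) : bool :=
  [exists k : 'I_#|T|, exists p : k.-tuple T,
     [&& path bedge x p, last x p == y, uniq (x :: p) & z \in x :: p]].

Definition highest (h : T) : Prop := part h /\ forall i, part i -> rval i <= rval h.

(* g D models {g^{1st}_D}: empty if D is empty, otherwise a singleton {x} with
   x in argmax_{i in D} v^{1st}_{V_i} (arbitrary tie-breaking) *)
Definition tiebreak (g : {set T} -> {set T}) : Prop :=
  forall D : {set T},
    (D = set0 -> g D = set0) /\
    (D != set0 -> exists x, [/\ g D = [set x], x \in D &
                               forall y, y \in D -> vmax (Vset y) <= vmax (Vset x)]).

Section Mechanism.
Variable h : T.
Variable g : {set T} -> {set T}.

Definition C : seq T := Cseq h.
(* c_j, 0-based: c 0 = c_1 of the paper *)
Definition cc (j : nat) : T := nth h C j.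
Definition Mset (j : nat) : {set T} :=
  if (j.+1 < size C)%N then [set z | weak z h && onsp (cc j) (cc j.+1) z] else set0.
Definition Kset (j : nat) : {set T} :=
  if (j.+1 < size C)%N then cc j.+1 |: Mset j else set0.
(* 0-based index of the winner c_w *)
Definition wi : nat :=
  find (fun j => rval (cc j) == vmax (Nminus (Kset j))) (iota 0 (size C)).
(* reward of c_j (0-based j >= 1, uses M between c_{j-1} and c_j) *)
Definition Rc (j : nat) : R :=
  if j is j'.+1 then
    (vmax (Nminus (cc j |: g (Mset j'))) - vmax (Nminus (cc j |: Mset j')))
      / (#|Mset j'|%:R + 1)
  else 0.
Definition Rm (m : nat) (i : T) : R :=
  (vmax (Nminus [set i; cc m.+1]) - vmax (Nminus (cc m.+1 |: Mset m)))
    / (#|Mset m|%:R + 1).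

Definition pay (i : T) : R :=
  if i \in take wi.+1 C then
    let j := index i C in
    (if (j < wi)%N then vmax (Nminus [set cc j]) - vmax (Nminus (Kset j))
     else vmax (Nminus [set cc j])) - Rc j
  else if has (fun m => i \in Mset m) (iota 0 wi) then
    - Rm (find (fun m => i \in Mset m) (iota 0 wi)) i
  else 0.

Definition fdm_revenue : R := \sum_(i : T) pay i.
Definition idm_revenue : R := vmax (Nminus [set cc 0]).
End Mechanism.

Definition vickrey_revenue : R := v2nd (rs :&: Npart).
End FDM.

(* Every buyer c_j of the winning chain c_1, ..., c_w pays v(N_{-c_j}) - v(N_{-K_j})
   (c_w pays v(N_{-c_w})) minus a reward.  As v(N_{-K}) decreases when K grows,
   the |M| + 1 rewards of the segment between c_j and c_{j+1} are each at most an
   (|M| + 1)-th of v(N_{-c_{j+1}}) - v(N_{-K_j}), so all payments and rewards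
   telescope down to at least v(N_{-c_1}), the IDM revenue.  The winner exists
   because h is strictly deeper than its other strong critical ancestors (they lie
   on every path to h), hence last in C, where K is empty and v(N) = v_h.
   For the Vickrey bound: every seller neighbour other than c_1 is reached directly
   from s, so survives in N_{-c_1}, and the second highest bid of a set is at most
   the highest bid of the set minus any one element. *)

From HB Require Import structures.
From mathcomp Require Import all_boot all_order all_algebra.
From mathcomp Require Import lra.
Import Order.TTheory GRing.Theory Num.Theory.
Local Open Scope ring_scope.

Set Implicit Arguments.
Unset Strict Implicit.
Unset Printing Implicit Defensive.

Lemma sorted_rcons_le (X : Type) (e : rel X) (s : seq X) (y : X) :
  transitive e -> sorted e (rcons s y) -> all (e^~ y) s.
Proof.
move=> e_tr; rewrite -[rcons s y]revK rev_sorted rev_rcons /= -all_rev.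
by apply: order_path_min => u v w /= vu wv; apply: e_tr wv vu.
Qed.

Lemma big_take_index (R : realFieldType) (T : finType) (x0 : T) (s : seq T) k
    (f : nat -> R) :
  uniq s -> (k <= size s)%N ->
  \sum_(i : T) (if i \in take k s then f (index i s) else 0) = \sum_(j < k) f j.
Proof.
move=> s_uniq k_le; rewrite -big_mkcond /= -big_uniq ?take_uniq //.
rewrite -{1}(mkseq_nth x0 s) /mkseq -map_take take_iota (minn_idPl k_le).
rewrite big_map -(subn0 k) big_mkord subn0; apply: eq_bigr => j _.
by rewrite index_uniq // (leq_trans (ltn_ord j) k_le).
Qed.

Lemma telescope_ge_head (R : realFieldType) (w : nat) (A B Rc RM : nat -> R) :
  Rc 0%N = 0 -> (forall m, (m < w)%N -> Rc m.+1 + RM m <= A m.+1 - B m) ->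
  A 0%N <= \sum_(j < w.+1) ((if (j < w)%N then A j - B j else A j) - Rc j)
           - \sum_(m < w) RM m.
Proof.
have split_last n : \sum_(j < n.+1) ((if (j < n)%N then A j - B j else A j) - Rc j)
                    = \sum_(j < n) (A j - B j - Rc j) + (A n - Rc n).
  by rewrite big_ord_recr /= ltnn; congr (_ + _); apply: eq_bigr => j _; rewrite ltn_ord.
move=> Rc0; elim: w => [|w IH] step.
  by rewrite big_ord1 big_ord0 /= Rc0 !subr0.
apply: le_trans (IH (fun m m_lt => step m (ltnW m_lt))) _.
rewrite !split_last big_ord_recr [X in _ <= _ - X]big_ord_recr /=.
have := step w (ltnSn w); lra.
Qed.

Section Valuations.
Variables (R : realFieldType) (T : finType) (a : T -> option (R * {set T})).
Implicit Types D : {set T}.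

Lemma vmax_ge0 D : 0 <= vmax a D.
Proof.
by apply: (big_rec (fun x => 0 <= x)) => // i x _ x_ge0; rewrite le_max x_ge0 orbT.
Qed.

Lemma le_vmax D i : i \in D -> rval a i <= vmax a D.
Proof. by move=> iD; rewrite /vmax (bigD1 i) //= le_max lexx. Qed.

Lemma vmax_le D x : 0 <= x -> {in D, forall i, rval a i <= x} -> vmax a D <= x.
Proof.
move=> x_ge0 le_x; apply: (big_ind (fun y => y <= x)) => [//|y z|i /le_x //].
by rewrite ge_max => -> ->.
Qed.

Lemma vmaxS D D' : D \subset D' -> vmax a D <= vmax a D'.
Proof.
by move=> /subsetP DD'; apply: vmax_le => [|i /DD' /le_vmax //]; apply: vmax_ge0.
Qed.

Lemma vmax_Npart h : highest a h -> 0 <= rval a h -> vmax a (Npart a) = rval a h.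
Proof.
move=> [h_part h_max] h_ge0; apply/le_anti.
rewrite le_vmax ?inE // andbT.
by apply: vmax_le => // i; rewrite inE => /h_max.
Qed.

(* Two bids of [D] reach the second highest one, and only [x] escapes [D :\ x]. *)
Lemma v2nd_le_vmaxD1 D x : v2nd a D <= vmax a (D :\ x).
Proof.
rewrite /v2nd; set s := sort _ _.
have s_sorted : sorted (fun u v : R => v <= u) s by apply: sort_sorted => u v; apply: le_total.
have s_perm : perm_eq s [seq rval a i | i <- enum D] by rewrite perm_sort.
case: s s_sorted s_perm => [|z [|y t]] /= s_sorted s_perm; rewrite ?vmax_ge0 //.
rewrite leNgt; apply/negP => vmax_lt_y.
have only_x i : i \in D -> y <= rval a i -> i == x.
  move=> iD; apply: contraLR => i_neq_x.
  by rewrite -ltNge (le_lt_trans _ vmax_lt_y) // le_vmax // !inE i_neq_x.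
have : (2 <= count (>= y) [:: z, y & t])%N.
  by move: s_sorted => /andP[y_le_z _]; rewrite /= y_le_z lexx.
rewrite (permP s_perm) count_map.
rewrite (eq_in_count (a2 := fun i => (y <= rval a i) && (i \in D))); last first.
  by move=> i; rewrite mem_enum /= => ->; rewrite andbT.
have le_count_x : subpred (fun i => (y <= rval a i) && (i \in D)) (pred1 x).
  by move=> i /andP[y_le iD]; apply: only_x.
move/leq_trans/(_ (sub_count le_count_x _)).
by rewrite count_uniq_mem ?enum_uniq //; case: (x \in enum D).
Qed.

End Valuations.

Section Network.
Variables (R : realFieldType) (T : finType) (rs : {set T}).
Variable a : T -> option (R * {set T}).
Implicit Types (D K : {set T}) (i j : T).

Local Notation sedge0 := (sedge rs a set0).
Local Notation depth := (depth rs a).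

Lemma Nminus_antiS K K' : K \subset K' -> Nminus rs a K' \subset Nminus rs a K.
Proof.
move=> /subsetP KK'; apply/subsetP => x; rewrite !inE => /andP[x_notin ->].
by rewrite andbT; apply: contra x_notin => /bigcupP[i /KK' iK' xVi]; apply/bigcupP; exists i.
Qed.

Lemma vmax_Nminus_antiS K K' :
  K \subset K' -> vmax a (Nminus rs a K') <= vmax a (Nminus rs a K).
Proof. by move/Nminus_antiS; apply: vmaxS. Qed.

Lemma Nminus0 : Nminus rs a set0 = Npart a.
Proof. by rewrite /Nminus big_set0 setD0. Qed.

Lemma reach_avoid_notin D i : reach_avoid rs a D i -> i \notin D.
Proof.
case/connectP => p; case/lastP: p => [|q y] //.
rewrite rcons_path last_rcons => /andP[_] + y_eq; rewrite -{}y_eq.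
by case: (last None q) => [k|] /=; case: (i \in D); rewrite ?andbF.
Qed.

Lemma strong_refl i : reach_avoid rs a set0 i -> strong rs a i i.
Proof.
move=> i_reach; rewrite /strong /mincut /cutset.
apply/andP; split; first by apply/negP => /reach_avoid_notin; rewrite set11.
apply/forallP => D; apply/implyP => D_proper; rewrite negbK.
have := proper_sub D_proper; rewrite subset1 => /orP[/eqP D_eq|/eqP -> //].
by move: D_proper; rewrite D_eq properE subxx.
Qed.

Lemma seller_nbr_notin_Vset c j :
  j \in rs -> part a j -> j != c -> j \notin Vset rs a c.
Proof.
move=> j_rs j_part j_neq_c; rewrite inE /strong /mincut /cutset negb_and negbK.
by rewrite /reach_avoid connect1 //= j_rs j_part inE j_neq_c.
Qed.

Lemma reachk_path p i :
  path sedge0 None p -> last None p = Some i -> reachk rs a (size p) i.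
Proof. by move=> p_path p_last; apply/existsP; exists (in_tuple p); rewrite p_path p_last /=. Qed.

Lemma reachk_depth i :
  reach_avoid rs a set0 i -> (depth i <= #|T|)%N /\ reachk rs a (depth i) i.
Proof.
case/connectP=> p p_path; case/shortenP: p_path => q q_path q_uniq _ /esym q_last.
have q_size : (size q <= #|T|)%N.
  by rewrite -ltnS -card_option -[(size q).+1]/(size (None :: q)) -(card_uniqP q_uniq) max_card.
have q_reach : has (reachk rs a ^~ i) (iota 0 #|T|.+1).
  by apply/hasP; exists (size q); rewrite ?mem_iota ?reachk_path.
have := nth_find 0%N q_reach; rewrite has_find size_iota in q_reach.
by rewrite nth_iota // add0n.
Qed.

Lemma depth_min i k : (k <= #|T|)%N -> reachk rs a k i -> (depth i <= k)%N.
Proof.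
move=> k_le k_reach; rewrite leqNgt; apply/negP => /(before_find 0%N).
by rewrite nth_iota ?add0n ?k_reach.
Qed.

Lemma sedge_avoid1 j x y :
  sedge0 x y -> x != Some j -> y != Some j -> sedge rs a [set j] x y.
Proof.
case: x y => [x|] [y|] //=; rewrite !inE ?(inj_eq Some_inj).
  by case/and5P=> -> _ -> -> _ -> ->.
by case/and3P=> -> -> _ _ ->.
Qed.

Lemma strong_mem_path j i q :
  strong rs a j i -> path sedge0 None q -> last None q = Some i -> Some j \in q.
Proof.
case/andP=> /negP j_cut _ q_path q_last; apply/negPn/negP => j_notin; apply: j_cut.
apply/connectP; exists q => //; apply: (sub_in_path (P := predC1 (Some j))) q_path.
  by move=> x y; rewrite !inE => x_neq y_neq /sedge_avoid1; apply.
by apply/allP => x; rewrite !inE /=; apply: contraTneq => ->.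
Qed.

Lemma depth_strong_lt j i :
  reach_avoid rs a set0 i -> strong rs a j i -> j != i -> (depth j < depth i)%N.
Proof.
move=> i_reach j_strong j_neq_i.
have [di_le /existsP[[p /= /eqP p_size] /andP[p_path /eqP p_last]]] := reachk_depth i_reach.
have jp := strong_mem_path j_strong p_path p_last.
set k := index (Some j) p.
have k_lt : (k.+1 < depth i)%N.
  have k_lt_size : (k < depth i)%N by rewrite -p_size index_mem.
  rewrite ltn_neqAle k_lt_size andbT; apply: contra_neq j_neq_i => k_eq.
  have : nth None p k = Some i by rewrite -p_last -nth_last p_size -k_eq.
  by rewrite nth_index // => -[].
have k_le_size : (k.+1 <= size p)%N by rewrite p_size ltnW.
have k_reach : reachk rs a k.+1 j.
  rewrite -(size_takel k_le_size); apply: reachk_path; first exact: take_path.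
  by rewrite -nth_last size_takel // nth_take // nth_index.
have k_le_card : (k.+1 <= #|T|)%N by apply: ltnW (leq_trans k_lt di_le).
exact: leq_ltn_trans (depth_min k_le_card k_reach) k_lt.
Qed.

End Network.

Section Mechanism.
Variables (R : realFieldType) (T : finType) (rs : {set T}).
Variables (a : T -> option (R * {set T})) (h : T) (g : {set T} -> {set T}).
Hypotheses (h_reach : reach_avoid rs a set0 h) (h_high : highest a h) (h_ge0 : 0 <= rval a h).

Local Notation Cs := (C rs a h).
Local Notation cc := (cc rs a h).
Local Notation Mset := (Mset rs a h).
Local Notation Kset := (Kset rs a h).
Local Notation wi := (wi rs a h).
Local Notation Rc := (Rc rs a h g).
Local Notation Rm := (Rm rs a h).
Local Notation vN K := (vmax a (Nminus rs a K)).

Lemma mem_C j : (j \in Cs) = strong rs a j h.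
Proof. by rewrite /C /Cseq mem_sort mem_enum inE. Qed.

Lemma uniq_C : uniq Cs.
Proof. by rewrite /C /Cseq sort_uniq enum_uniq. Qed.

Lemma h_in_C : h \in Cs.
Proof. by rewrite mem_C strong_refl. Qed.

Lemma last_C : last h Cs = h.
Proof.
have depth_tr : transitive (fun x y => depth rs a x <= depth rs a y)%N.
  by move=> y x z /leq_trans; apply.
have Cs_sorted : sorted (fun x y => depth rs a x <= depth rs a y)%N Cs.
  by apply: sort_sorted => x y; apply: leq_total.
have := h_in_C; case/lastP E: Cs Cs_sorted => [//|s y]; rewrite last_rcons.
have y_strong : strong rs a y h by rewrite -mem_C E mem_rcons mem_head.
rewrite mem_rcons inE => /(sorted_rcons_le depth_tr)/allP h_le /predU1P[-> //|hs].
by apply: contraTeq isT => /(depth_strong_lt h_reach y_strong); rewrite ltnNge h_le.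
Qed.

Lemma size_C_gt0 : (0 < size Cs)%N.
Proof. by have := h_in_C; case: Cs. Qed.

Lemma wi_lt_size : (wi < size Cs)%N.
Proof.
rewrite /wi -[X in (_ < X)%N](size_iota 0 (size Cs)) -has_find.
apply/hasP; exists (size Cs).-1; first by rewrite mem_iota add0n prednK ?leqnn ?size_C_gt0.
rewrite /cc nth_last last_C /Kset prednK ?size_C_gt0 // ltnn.
by rewrite Nminus0 (vmax_Npart h_high h_ge0).
Qed.

Lemma Rm_ge0 m i : i \in Mset m -> 0 <= Rm m i.
Proof.
move=> iM; apply: divr_ge0; last by rewrite natr1 ler0n.
rewrite subr_ge0; apply: vmax_Nminus_antiS.
by apply/subsetP => x; rewrite !inE => /orP[] /eqP ->; rewrite ?iM ?eqxx ?orbT.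
Qed.

Lemma segment_rewards_le m : (m.+1 < size Cs)%N ->
  Rc m.+1 + \sum_(i in Mset m) Rm m i <= vN [set cc m.+1] - vN (Kset m).
Proof.
move=> m_lt; rewrite /Kset m_lt /Rc /Rm.
set M := Mset m; set c := cc m.+1; set d := #|M|%:R + 1.
set gap := vN [set c] - vN (c |: M).
have d_gt0 : 0 < d by rewrite /d natr1 ltr0Sn.
have share_le (K : {set T}) : c \in K -> (vN K - vN (c |: M)) / d <= gap / d.
  move=> cK; rewrite ler_pM2r ?invr_gt0 // lerD2r.
  by apply: vmax_Nminus_antiS; rewrite sub1set.
have -> : gap = gap / d + \sum_(i in M) gap / d.
  by rewrite sumr_const -mulr_natr -{1}(mulr1 (gap / d)) -mulrDr addrC divfK ?gt_eqF.
apply: lerD; first by rewrite share_le ?setU11.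
by apply: ler_sum => i _; rewrite share_le // !inE eqxx orbT.
Qed.

Definition chain_pay j : R :=
  (if (j < wi)%N then vN [set cc j] - vN (Kset j) else vN [set cc j]) - Rc j.

Lemma pay_lower_bound i :
  (if i \in take wi.+1 Cs then chain_pay (index i Cs) else 0)
  - \sum_(m < wi) (if i \in Mset m then Rm m i else 0) <= pay rs a h g i.
Proof.
have Rm_sum_ge0 (P : pred 'I_wi) :
    0 <= \sum_(m < wi | P m) (if i \in Mset m then Rm m i else 0).
  by apply: sumr_ge0 => m _; case: ifP => // /Rm_ge0.
rewrite /pay; case: ifP => _; first by have := Rm_sum_ge0 xpredT; rewrite /chain_pay; lra.
case: ifP => [i_in_M|_]; last by have := Rm_sum_ge0 xpredT; lra.
set m := find _ _.
have m_lt : (m < wi)%N by rewrite -[X in (_ < X)%N](size_iota 0 wi) -has_find.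
have iM : i \in Mset m by have := nth_find 0%N i_in_M; rewrite nth_iota.
rewrite (bigD1 (Ordinal m_lt)) //= iM.
have := Rm_sum_ge0 (predC1 (Ordinal m_lt)); lra.
Qed.

Lemma idm_le_fdm_revenue : idm_revenue rs a h <= fdm_revenue rs a h g.
Proof.
apply: le_trans (ler_sum _ (fun i _ => pay_lower_bound i)).
rewrite sumrB (big_take_index h _ uniq_C wi_lt_size) exchange_big /=.
under [X in _ - X]eq_bigr => m _ do rewrite -big_mkcond /=.
apply: (@telescope_ge_head _ wi (fun j => vN [set cc j]) (fun j => vN (Kset j)) Rc
          (fun m => \sum_(i in Mset m) Rm m i)) => // m m_lt.
exact: segment_rewards_le (leq_ltn_trans m_lt wi_lt_size).
Qed.

Lemma vickrey_le_idm_revenue : vickrey_revenue rs a <= idm_revenue rs a h.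
Proof.
apply: le_trans (v2nd_le_vmaxD1 _ _ (cc 0)) _; apply: vmaxS.
apply/subsetP => j; rewrite !inE => /andP[j_neq /andP[j_rs j_part]].
have := seller_nbr_notin_Vset j_rs j_part j_neq.
by rewrite /Nminus big_set1 !inE j_part andbT.
Qed.

End Mechanism.

Theorem theorem3 (R : realFieldType) (T : finType)
  (r : T -> {set T}) (rs : {set T}) (a : T -> option (R * {set T}))
  (h : T) (g : {set T} -> {set T}) :
  (forall i j : T, (j \in r i) = (i \in r j)) ->
  (forall (i : T) (x : R) (Si : {set T}), a i = Some (x, Si) -> 0 <= x /\ Si \subset r i) ->
  feasible rs a ->
  highest a h ->
  tiebreak rs a g ->
  idm_revenue rs a h <= fdm_revenue rs a h g /\
  vickrey_revenue rs a <= idm_revenue rs a h.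
Proof.
move=> _ bid_ge0 feas h_high _.
have h_reach : reach_avoid rs a set0 h by apply: feas; case: h_high.
have h_ge0 : 0 <= rval a h.
  by rewrite /rval; case E: (a h) => [[x S]|] //; case: (bid_ge0 _ _ _ E).
split; first exact: idm_le_fdm_revenue.
exact: vickrey_le_idm_revenue.
Qed.
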